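(* Let $V\subset\mathbb{R}^d$ be a finite non-degenerate antichain and let $p\in S_V$ be a generated point. Then $p$ is a characteristic point if and only if there are no minima $u,v\in D_p$ with $T_p(u)\subsetneq T_p(v)$.
   Context: For $x,y\in\mathbb{R}^d$, $x\le y$ (dominance order) means $x_i\le y_i$ for all $i$; $y\rhd x$ means $y_i>x_i$ for all $i$; $y\rhd_i x$ means $y_i=x_i$ and $y_j>x_j$ for all $j\neq i$. The join is the componentwise maximum. $V\subset\mathbb{R}^d$ is a finite antichain in the dominance order (elements are called minima). The orthogonal surface $S_V$ is the topological boundary of $\langle V\rangle=\{x: x\ge v\text{ for some }v\in V\}$; equivalently $p\in S_V$ iff there is $v\in V$ with $v\le p$ and no $w\in V$ with $p\rhd w$. For $p\in S_V$, $D_p=\{v\in V:v\le p\}$ and for $v\in D_p$, $T_p(v)=\{i: p_i=v_i\}$. A generated point is a point $p\in S_V$ equal to $\bigvee G$ for some nonempty $G\subseteq V$. Flats: $U_i(v)=\{p\in S_V: p\rhd_i v\}$; for $v,w\in V$ put $v\sim_i w$ iff $U_i(v)\cap U_i(w)\neq\emptyset$, and let $\sim_i^c$ be the reflexive–transitive closure; the $i$-flat of $v$ is $F_i(v)=\overline{\bigcup_{w\sim_i^c v}U_i(w)}$ (topological closure), and an $i$-flat is any set of this form. A characteristic point is a point of $S_V$ that lies in some $i$-flat for every $i\in\{1,\dots,d\}$. $V$ (and $S_V$) is degenerate if there exist a characteristic point $p$, minima $x,u,v\in D_p$ and coordinates $i\neq j$ with $u_i<v_i=x_i=p_i$ and $v_j<u_j=x_j=p_j$;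 otherwise $V$ is non-degenerate. *)

From HB Require Import structures.
From mathcomp Require Import all_boot all_order all_algebra.
From mathcomp Require Import all_classical all_reals all_analysis.
From Stdlib Require Import Relations.
Set Implicit Arguments. Unset Strict Implicit. Unset Printing Implicit Defensive.
Import Order.TTheory GRing.Theory Num.Theory.
Import numFieldTopology.Exports.
Local Open Scope classical_set_scope.
Local Open Scope ring_scope.

Section OrthSurf.
Variables (R : realType) (d : nat).
Notation pt := 'rV[R]_d.

Definition dle (x y : pt) : Prop := forall i : 'I_d, x 0 i <= y 0 i.
Definition dgt (y x : pt) : Prop := forall i : 'I_d, x 0 i < y 0 i.
Definition dgti (i : 'I_d) (y x : pt) : Prop :=
  y 0 i = x 0 i /\ forall j : 'I_d, j != i -> x 0 j < y 0 j.

Definition djoin (G : seq pt) : pt :=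
  \row_i \big[Num.max/(head 0 G) 0 i]_(g <- G) g 0 i.

Variable V : seq pt.

Definition antichain : Prop :=
  forall v w, v \in V -> w \in V -> dle v w -> v = w.

Definition surf (p : pt) : Prop :=
  (exists2 v, v \in V & dle v p) /\ ~ (exists2 w, w \in V & dgt p w).

Definition inD (p v : pt) : Prop := v \in V /\ dle v p.

Definition T (p v : pt) (i : 'I_d) : Prop := p 0 i = v 0 i.

Definition generated (p : pt) : Prop :=
  surf p /\ exists G : seq pt, [/\ G != [::], all (fun g => g \in V) G & p = djoin G].

Definition U (i : 'I_d) (v : pt) : set pt := [set p | surf p /\ dgti i p v].

Definition simi (i : 'I_d) (v w : pt) : Prop :=
  [/\ v \in V, w \in V & exists p, U i v p /\ U i w p].

Definition flat (i : 'I_d) (v : pt) : set pt :=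
  closure [set p | exists w, clos_refl_trans pt (simi i) v w /\ U i w p].

Definition is_iflat (i : 'I_d) (F : set pt) : Prop :=
  exists2 v, v \in V & F = flat i v.

Definition characteristic (p : pt) : Prop :=
  surf p /\ forall i : 'I_d, exists F, is_iflat i F /\ F p.

Definition degenerate : Prop :=
  exists p, characteristic p /\
  exists x u v, [/\ inD p x, inD p u & inD p v] /\
  exists i j : 'I_d, i != j /\
    (u 0 i < v 0 i /\ v 0 i = x 0 i /\ x 0 i = p 0 i) /\
    (v 0 j < u 0 j /\ u 0 j = x 0 j /\ x 0 j = p 0 j).

End OrthSurf.

(** Fix a coordinate i.  A minimum w in D_p with w_i = p_i exists because p is a
    join of minima; raising p by a tiny eps in the coordinates j <> i where w
    touches p gives a point q with q |>_i w, and q stays on S_V unless some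
    minimum x <= p has T_p(x) ⊆ T_p(w) while i ∉ T_p(x).  So if no two contact
    sets are strictly nested, p is a limit of points of U_i(w) and lies in an
    i-flat.  Conversely, if T_p(u) ⊊ T_p(v) with i ∈ T_p(v) \ T_p(u), a point q
    of U_i(w) close enough to p (closer than every nonzero gap between a
    coordinate of a minimum and the corresponding coordinate of p) forces
    w ∈ D_p with w_i = p_i, and a coordinate l with q_l <= u_l, hence
    u_l = p_l > w_l; the minima v, u, w and the coordinates i, l then make V
    degenerate. *)
From HB Require Import structures.
From mathcomp Require Import all_boot all_order all_algebra.
From mathcomp Require Import all_classical all_reals all_analysis.
From mathcomp Require Import lra.
From Stdlib Require Import Relations.
Import Order.TTheory GRing.Theory Num.Theory numFieldTopology.Exports.
Set Implicit Arguments. Unset Strict Implicit.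
Local Open Scope classical_set_scope.
Local Open Scope ring_scope.

Lemma bigmax_seq_attained (disp : Order.disp_t) (T : orderType disp)
    (I : eqType) (s : seq I) (F : I -> T) i0 :
  i0 \in s -> exists2 i, i \in s & \big[Order.max/F i0]_(j <- s) F j = F i.
Proof.
move=> i0s; rewrite big_seq.
apply: (big_ind (fun y => exists2 i, i \in s & y = F i))
  => [|y z [i si ->] [j sj ->]|i si].
- by exists i0.
- by case: (leP (F i) (F j)) => _; [exists j|exists i].
- by exists i.
Qed.

Lemma exists_norm_lbound_nonzero (R : realType) (s : seq R) :
  exists2 e : R, 0 < e & forall y, y \in s -> y != 0 -> e <= `|y|.
Proof.
exists (\big[Num.min/1]_(y <- s | y != 0) `|y|).
  by apply: (big_ind (fun x => 0 < x)) => [//|x y x0 y0|y y0];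
    rewrite ?lt_min ?x0 ?y0 ?normr_gt0.
by move=> y ys y0; apply: ge_bigmin_seq.
Qed.

Section OrthogonalSurface.
Variables (R : realType) (d : nat).
Notation pt := 'rV[R]_d.
Variable V : seq pt.

Lemma ball_rowP (p q : pt) (e : R) : 0 < e ->
  ball p e q <-> forall l, `|p 0 l - q 0 l| < e.
Proof.
move=> e0; split=> [[_ H] l|H]; first exact: H.
by split=> // i j; rewrite (ord1 i); apply: H.
Qed.

Lemma simi_rt_mem i v w :
  v \in V -> clos_refl_trans pt (simi V i) v w -> w \in V.
Proof. by move=> + H; elim: H => [x y []|//|x y z _ IH1 _ IH2] // /IH1/IH2. Qed.

Lemma flat_mem_near i v p e : v \in V -> flat V i v p -> 0 < e ->
  exists w q, [/\ w \in V, U V i w q & forall l, `|p 0 l - q 0 l| < e].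
Proof.
move=> vV Fp e0; have [q [[w [vw Uq]] pq]] := Fp _ (nbhsx_ballx p _ e0).
by exists w, q; split=> //; [apply: simi_rt_mem vV vw|apply/ball_rowP].
Qed.

Lemma generated_attains p i : generated V p -> exists2 w, inD V p w & T p w i.
Proof.
case=> _ [G [+ /allP GV ->]]; case: G GV => [//|g0 G] GV _.
have gle g : g \in g0 :: G -> dle g (djoin (g0 :: G)).
  by move=> gG l; rewrite mxE; exact: le_bigmax_seq gG _.
have [g gG gi] := bigmax_seq_attained (fun g : pt => g 0 i) (mem_head g0 G).
by exists g; [split; [apply: GV|apply: gle]|rewrite /T mxE gi].
Qed.

Definition coord_gap (p : pt) (e : R) :=
  forall x l, x \in V -> x 0 l != p 0 l -> e <= `|x 0 l - p 0 l|.

Lemma exists_coord_gap p : exists2 e, 0 < e & coord_gap p e.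
Proof.
have [e e0 He] := exists_norm_lbound_nonzero
  [seq (x : pt) 0 l - p 0 l | x <- V, l <- enum 'I_d].
exists e => // x l xV xl; apply: He; last by rewrite subr_eq0.
by apply: (allpairs_f (fun (x : pt) l => x 0 l - p 0 l)); rewrite ?mem_enum.
Qed.

Section Gap.
Variables (p : pt) (e : R).
Hypothesis gapE : coord_gap p e.

Lemma gap_le x l : x \in V -> x 0 l < p 0 l + e -> x 0 l <= p 0 l.
Proof.
move=> xV xl; rewrite leNgt; apply/negP => px.
by have := gapE xV (negbT (gt_eqF px)); rewrite ler_normr; lra.
Qed.

Lemma gap_ge x l : x \in V -> p 0 l - e < x 0 l -> p 0 l <= x 0 l.
Proof.
move=> xV xl; rewrite leNgt; apply/negP => xp.
by have := gapE xV (negbT (lt_eqF xp)); rewrite ler_normr; lra.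
Qed.

Lemma U_near_attains i w q : w \in V -> dgti i q w ->
  (forall l, `|p 0 l - q 0 l| < e) -> inD V p w /\ T p w i.
Proof.
move=> wV [qwi qwj] pq.
have wi : w 0 i = p 0 i.
  have := pq i; rewrite qwi ltr_norml => /andP[? ?].
  by apply/le_anti/andP; split; [apply: gap_le wV _|apply: gap_ge wV _]; lra.
split; last by rewrite /T wi.
split=> // l; case: (eqVneq l i) => [->|li]; first by rewrite wi.
by apply: gap_le wV _; have := qwj l li; have := pq l; rewrite ltr_norml; lra.
Qed.

Lemma surf_near_touch q u : surf V q -> inD V p u ->
  (forall l, `|p 0 l - q 0 l| < e) -> exists l, q 0 l <= u 0 l /\ T p u l.
Proof.
move=> [_ nq] [uV up] pq.
have [l ql] : exists l, q 0 l <= u 0 l.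
  apply: contra_notP nq => nle; exists u => // l; rewrite ltNge.
  by apply/negP => ql; apply: nle; exists l.
exists l; split=> //; apply/le_anti; rewrite up gap_ge //.
by have := pq l; rewrite ltr_norml; lra.
Qed.

End Gap.

Lemma strict_inclusion_degenerate (p u v : pt) i : characteristic V p ->
  inD V p u -> inD V p v -> (forall j, T p u j -> T p v j) ->
  T p v i -> ~ T p u i -> degenerate V.
Proof.
move=> chp Du Dv Tuv Tvi nTui.
have [e e0 gapE] := exists_coord_gap p.
have [F [[v0 v0V ->] Fp]] := chp.2 i.
have [w [q [wV [surfq [qwi qwj]] pq]]] := flat_mem_near v0V Fp e0.
have [Dw Twi] := U_near_attains gapE wV (conj qwi qwj) pq.
have [l [ql Tul]] := surf_near_touch gapE surfq Du pq.
have ui : u 0 i < p 0 i.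
  by rewrite lt_neqAle Du.2 andbT; apply/eqP => E; apply: nTui.
have li : l != i by apply: contraTneq ql => ->; rewrite -ltNge qwi -Twi.
have wl : w 0 l < p 0 l by rewrite Tul; exact: lt_le_trans (qwj l li) ql.
exists p; split=> //; exists v, u, w; split=> //.
exists i, l; split; first by rewrite eq_sym.
split; split; [by rewrite -Twi|split|by rewrite -Tul|split].
- by rewrite -Twi -Tvi.
- exact: esym Tvi.
- by rewrite -Tul (Tuv l Tul).
- exact: esym (Tuv l Tul).
Qed.

Definition lift_off (p w : pt) i (eps : R) : pt :=
  \row_j if (j != i) && (p 0 j == w 0 j) then p 0 j + eps else p 0 j.

Lemma lift_off_bounds (p w : pt) i eps j : 0 <= eps ->
  p 0 j <= lift_off p w i eps 0 j <= p 0 j + eps.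
Proof. by move=> eps0; rewrite mxE; case: ifP => _; lra. Qed.

Lemma lift_off_dgti (p w : pt) i eps : dle w p -> T p w i -> 0 < eps ->
  dgti i (lift_off p w i eps) w.
Proof.
move=> wp Twi eps0; split; first by rewrite mxE eqxx /= Twi.
move=> j ji; rewrite mxE ji /=; case: eqP => [<-|pw]; first lra.
by rewrite lt_neqAle wp andbT; apply/eqP => E; apply: pw; rewrite E.
Qed.

Lemma lift_off_surf (p w : pt) i e eps : coord_gap p e -> 0 < eps <= e ->
  inD V p w -> T p w i ->
  (forall x, inD V p x -> (forall j, T p x j -> T p w j) -> T p x i) ->
  surf V (lift_off p w i eps).
Proof.
move=> gapE /andP[eps0 epse] [wV wp] Twi Hw.
have qb j := lift_off_bounds p w i j (ltW eps0).
split; first by exists w => // j; have := wp j; have := qb j; lra.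
case=> x xV xq.
have xp : dle x p.
  by move=> j; apply: (gap_le gapE xV); have := xq j; have := qb j; lra.
suff : T p x i by rewrite /T => E; have := xq i; rewrite mxE eqxx /= E ltxx.
apply: Hw => // j Txj; have := xq j; rewrite mxE -Txj.
by case: ifP => [/andP[_ /eqP]//|_]; rewrite ltxx.
Qed.

Lemma attaining_mem_flat (p w : pt) i : inD V p w -> T p w i ->
  (forall x, inD V p x -> (forall j, T p x j -> T p w j) -> T p x i) ->
  flat V i w p.
Proof.
move=> Dw Twi Hw B /nbhs_ballP [e' /= e'0 Be'].
have [e e0 gapE] := exists_coord_gap p.
pose eps := Num.min e (e' / 2).
have eps0 : 0 < eps by rewrite lt_min e0 divr_gt0.
have epse : eps <= e by rewrite ge_min lexx.
have epse' : eps <= e' / 2 by rewrite ge_min lexx orbT.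
exists (lift_off p w i eps); split.
  exists w; split; first exact: rt_refl.
  split; first by apply: lift_off_surf gapE _ Dw Twi Hw; rewrite eps0 epse.
  exact: lift_off_dgti Dw.2 Twi eps0.
apply: Be'; apply/ball_rowP => // j.
by have := lift_off_bounds p w i j (ltW eps0); rewrite ltr_norml; lra.
Qed.

End OrthogonalSurface.

Theorem proposition4p2 (R : realType) (d : nat) (V : seq 'rV[R]_d) (p : 'rV[R]_d) :
  antichain V -> ~ degenerate V -> generated V p ->
  (characteristic V p <->
   ~ (exists u v, [/\ inD V p u, inD V p v,
        (forall i, T p u i -> T p v i) & (exists i, T p v i /\ ~ T p u i)])).
Proof.
move=> _ ndeg genp; split.
- move=> chp [u [v [Du Dv Tuv [i [Tvi nTui]]]]].
  exact: ndeg (strict_inclusion_degenerate chp Du Dv Tuv Tvi nTui).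
- move=> nested; split=> [|i]; first exact: genp.1.
  have [w Dw Twi] := generated_attains i genp.
  exists (flat V i w); split; first by exists w; case: Dw.
  apply: attaining_mem_flat => // x Dx Txw.
  by apply: contrapT => nTxi; apply: nested; exists x, w; split=> //; exists i.
Qed.
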